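(* Consider multiclass data $(x,y)$ with $x\in\mathcal{X}\subseteq\mathbb{R}^d$ drawn from a fixed distribution and labels $y\in\{1,\dots,k\}$, where $k\ge2$. A binary decision tree is grown top-down from a single root leaf. At each step $t=1,2,\dots$, the leaf $m$ of largest weight is split into two children using a hypothesis $h_m:\mathcal{X}\to\{-1,1\}$: $h_m(x)=1$ sends $x$ to the right child and $h_m(x)=-1$ sends it to the left child. After $t$ steps the tree has $t$ internal nodes. Assume the Weak Hypothesis Assumption holds with parameter $\gamma$: there is $\gamma>0$ such that for every split node $m$, \[ \gamma\le\min(\beta_m,1-\beta_m)\quad\text{and}\quad \tfrac12 J(h_m)=\sum_{i=1}^k\pi_{m,i}\,|P_{m,i}-\beta_m|\ge\gamma . \] Then for any $\alpha\in[0,2\ln k]$, the entropy after $t$ splits satisfies $G_t^e\le\alpha$ whenever \[ t\ \ge\ \left(\frac{2\ln k}{\alpha}\right)^{\frac{4(1-\gamma)^2}{\gamma^2\log_2 e}\ln k}. \]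
   Context: For a node $m$, $w_m$ is the probability that $x$ reaches $m$ (its weight). $\pi_{m,i}$ is the probability that $x$ has label $i$ given that it reaches $m$. $\beta_m=P(h_m(x)>0)$ and $P_{m,i}=P(h_m(x)>0\mid i)$, both computed for $x$ conditioned on reaching $m$ (the latter also conditioned on label $i$). Thus \[ J(h_m)=2\sum_i\pi_{m,i}\,|\beta_m-P_{m,i}|. \] For the tree after $t$ splits with leaf set $\mathcal{L}$, \[ G_t^e=\sum_{l\in\mathcal{L}}w_l\sum_{i=1}^k\pi_{l,i}\ln\frac{1}{\pi_{l,i}}, \] with the convention $0\ln(1/0)=0$. *)

From HB Require Import structures.
From mathcomp Require Import all_boot all_order all_algebra.
From mathcomp Require Import all_classical all_reals all_analysis.
Set Implicit Arguments. Unset Strict Implicit. Unset Printing Implicit Defensive.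
Import Order.TTheory GRing.Theory Num.Theory.
Local Open Scope classical_set_scope.
Local Open Scope ring_scope.

(* Data model: a probability space (Omega, P); the data point (x,y) is given by
   random variables  X : Omega -> 'rV[R]_d  (the feature vector) and
   Y : Omega -> 'I_k (the label; label i+1 of the paper is the ordinal i).
   A node of the tree is represented by its region S : set 'rV[R]_d, the set of
   feature vectors routed to it. *)
Section TreeDefs.
Variables (R : realType) (dO : measure_display) (Omega : measurableType dO).
Variable (P : probability Omega R).
Variables (d k : nat) (X : Omega -> 'rV[R]_d) (Y : Omega -> 'I_k).

Definition weight (S : set 'rV[R]_d) : R := fine (P (X @^-1` S)).

Definition jointw (S : set 'rV[R]_d) (i : 'I_k) : R :=
  fine (P (X @^-1` S `&` Y @^-1` [set i])).

Definition pi_ (S : set 'rV[R]_d) (i : 'I_k) : R := jointw S i / weight S.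

Definition right_child (S : set 'rV[R]_d) (h : 'rV[R]_d -> R) :=
  S `&` [set z | 0 < h z].
(* region of the left child: h = -1, i.e. not (h > 0) *)
Definition left_child (S : set 'rV[R]_d) (h : 'rV[R]_d -> R) :=
  S `&` [set z | ~ (0 < h z)].

Definition beta_ (S : set 'rV[R]_d) (h : 'rV[R]_d -> R) : R :=
  weight (right_child S h) / weight S.

Definition Pmi (S : set 'rV[R]_d) (h : 'rV[R]_d -> R) (i : 'I_k) : R :=
  jointw (right_child S h) i / jointw S i.

Definition Jsplit (S : set 'rV[R]_d) (h : 'rV[R]_d -> R) : R :=
  2 * \sum_(i < k) pi_ S i * `|beta_ S h - Pmi S h i|.

(* entropy of a tree given by the list of regions of its leaves,
   with the convention 0 ln (1/0) = 0 *)
Definition entropyG (L : seq (set 'rV[R]_d)) : R :=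
  \sum_(l <- L) weight l *
     \sum_(i < k) (if pi_ l i == 0 then 0 else pi_ l i * ln (pi_ l i)^-1).

Definition WHA (Xset : set 'rV[R]_d) (gamma : R) (S : set 'rV[R]_d)
    (h : 'rV[R]_d -> R) : Prop :=
  [/\ (forall z, Xset z -> h z = 1 \/ h z = -1),
      measurable (X @^-1` [set z | 0 < h z]),
      gamma <= Num.min (beta_ S h) (1 - beta_ S h) &
      gamma <= Jsplit S h / 2].

Definition grow_step (Xset : set 'rV[R]_d) (gamma : R)
    (L L' : seq (set 'rV[R]_d)) : Prop :=
  exists (L1 L2 : seq (set 'rV[R]_d)) (m : set 'rV[R]_d) (h : 'rV[R]_d -> R),
    [/\ L = L1 ++ m :: L2,
        (forall (A B : seq (set 'rV[R]_d)) (l : set 'rV[R]_d),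
           L = A ++ l :: B -> weight l <= weight m),
        WHA Xset gamma m h &
        L' = L1 ++ right_child m h :: left_child m h :: L2].

End TreeDefs.

Definition log2 {R : realType} (x : R) : R := ln x / ln 2.

(* Splitting a leaf m under the Weak Hypothesis Assumption lowers the entropy
   by at least w_m gamma^2.  Label by label, the loss is w_m pi_{m,i} times the
   binary Kullback-Leibler divergence between P_{m,i} and beta_m, which bounds
   (beta_m - P_{m,i})^2 through the Hellinger distance; by Jensen,
   sum_i pi_{m,i} (beta_m - P_{m,i})^2 >= (J(h_m)/2)^2 >= gamma^2.  The split
   leaf is the heaviest of s + 1 leaves, so w_m >= 1/(s+1), and since
   G_0 <= ln k (Gibbs) we get G_t <= ln k - gamma^2 H_t <= ln k - gamma^2 ln t
   with H_t the harmonic sum.  Under the stated threshold on t this is at most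
   alpha, using gamma <= 1/2 and ln 2 >= 0.62. *)

From mathcomp Require Import all_boot all_order all_algebra.
From mathcomp Require Import all_classical all_reals all_analysis.
From mathcomp Require Import ring lra.
Set Implicit Arguments. Unset Strict Implicit. Unset Printing Implicit Defensive.
Import Order.TTheory GRing.Theory Num.Theory.
Local Open Scope classical_set_scope.
Local Open Scope ring_scope.

Section entropy_inequalities.
Context {R : realType}.
Implicit Types (a b c e l r x y W WR WL : R).

Lemma ln_le_subr1 y : 0 < y -> ln y <= y - 1.
Proof. by move=> y0; have := @le_ln1Dx R (y - 1); rewrite (addrC 1) subrK; apply; lra. Qed.

Lemma sqr_subr_sqr_le_hellinger a b c e : 0 <= a -> 0 <= b -> 0 <= c -> 0 <= e ->
  a ^+ 2 + c ^+ 2 = 1 -> b ^+ 2 + e ^+ 2 = 1 ->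
  (a ^+ 2 - b ^+ 2) ^+ 2 <= (a - b) ^+ 2 + (c - e) ^+ 2.
Proof.
move=> a0 b0 c0 e0 ac1 be1.
set D := (a ^+ 2 - b ^+ 2) ^+ 2.
set U := (a - b) ^+ 2; set V := (c - e) ^+ 2.
set S := (a + b) ^+ 2; set T := (c + e) ^+ 2.
have DUS : D = U * S by rewrite /D /U /S; ring.
have DVT : D = V * T.
  by rewrite /D (_ : a ^+ 2 - b ^+ 2 = e ^+ 2 - c ^+ 2) /V /T; [ring | lra].
have [U0 V0 S0 T0] : [/\ 0 <= U, 0 <= V, 0 <= S & 0 <= T] by split; exact: sqr_ge0.
have ST4 : S + T <= 4 by rewrite /S /T; move: (sqr_ge0 (a - b)) (sqr_ge0 (c - e));
  rewrite !sqrrB !sqrrD; lra.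
(* 4 D = U S + V T + 2 D <= (U + V) (S + T) <= 4 (U + V), the middle step by
   AM-GM since D ^ 2 = (U T) (V S). *)
have cross : 2 * D <= U * T + V * S.
  have DD : D * D = (U * T) * (V * S) by rewrite {1}DUS DVT; ring.
  have [UT0 VS0] : 0 <= U * T /\ 0 <= V * S by split; apply: mulr_ge0.
  have D0 : 0 <= D by rewrite DUS mulr_ge0.
  have := sqr_ge0 (U * T - V * S); nra.
have : (U + V) * (S + T) <= 4 * (U + V) by rewrite [4 * _]mulrC ler_wpM2l ?addr_ge0.
have -> : (U + V) * (S + T) = U * S + V * T + (U * T + V * S) by ring.
rewrite -DUS -DVT; lra.
Qed.

Lemma mul_ln_div_ge_sqrt x b : 0 <= x -> 0 < b ->
  2 * x - 2 * (Num.sqrt x * Num.sqrt b) <= x * ln (x / b).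
Proof.
move=> x0 b0; have [->|xn0] := eqVneq x 0; first by rewrite sqrtr0 !(mul0r, mulr0) subrr.
have xp : 0 < x by rewrite lt_def xn0.
set a := Num.sqrt x; set c := Num.sqrt b.
have [a0 c0] : 0 < a /\ 0 < c by rewrite !sqrtr_gt0.
have xa : x = a ^+ 2 by rewrite sqr_sqrtr.
have bc : b = c ^+ 2 by rewrite sqr_sqrtr // ltW.
have -> : ln (x / b) = - (2 * ln (c / a)).
  rewrite xa bc -expr_div_n lnXn ?divr_gt0 // -[a / c]invf_div.
  by rewrite lnV ?posrE ?divr_gt0 // mulr2n; ring.
have := ln_le_subr1 (divr_gt0 c0 a0).
have xca : x * (c / a) = a * c by rewrite xa; field; rewrite gt_eqF.
nra.
Qed.

Lemma binary_kl_ge_sqr x b : 0 <= x <= 1 -> 0 < b < 1 ->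
  (b - x) ^+ 2 <= x * ln (x / b) + (1 - x) * ln ((1 - x) / (1 - b)).
Proof.
move=> /andP[x0 x1] /andP[b0 b1].
have := mul_ln_div_ge_sqrt x0 b0.
have := @mul_ln_div_ge_sqrt (1 - x) (1 - b); rewrite subr_ge0 subr_gt0 => /(_ x1 b1).
have := @sqr_subr_sqr_le_hellinger (Num.sqrt x) (Num.sqrt b) (Num.sqrt (1 - x))
  (Num.sqrt (1 - b)).
rewrite !sqrtr_ge0 !sqrrB !sqr_sqrtr; lra.
Qed.

Definition entr (p : R) : R := if p == 0 then 0 else p * ln p^-1.

Lemma mul_entr_div W a : 0 < W -> 0 <= a -> W * entr (a / W) = a * ln (W / a).
Proof.
move=> W0 a0; rewrite /entr mulf_eq0 invr_eq0 (gt_eqF W0) orbF.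
have [->|an0] := eqVneq a 0; first by rewrite !mul0r mulr0.
by rewrite invf_div mulrA [W * _]mulrC divfK ?gt_eqF.
Qed.

Lemma mul_ln_div r a b : (r != 0 -> 0 < a /\ 0 < b) ->
  r * ln (a / b) = r * ln a - r * ln b.
Proof.
move=> pos; have [->|/pos[a0 b0]] := eqVneq r 0; first by rewrite !mul0r subrr.
by rewrite ln_div ?posrE // mulrBr.
Qed.

(* The entropy lost by splitting a mass r + l between two children of weights
   WR and WL is (r + l) times a binary Kullback-Leibler divergence. *)
Lemma entr_split_gain WR WL r l : 0 < WR -> 0 < WL -> 0 <= r -> 0 <= l ->
  (r + l) * (WR / (WR + WL) - r / (r + l)) ^+ 2 <=
  (WR + WL) * entr ((r + l) / (WR + WL)) - WR * entr (r / WR) - WL * entr (l / WL).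
Proof.
move=> WR0 WL0 r0 l0; set W := WR + WL.
have W0 : 0 < W by rewrite addr_gt0.
rewrite !mul_entr_div ?addr_ge0 //.
have [rl0|qp] := leP (r + l) 0.
  have [-> ->] : r = 0 /\ l = 0 by lra.
  by rewrite !(addr0, mul0r, subr0).
set q := r + l.
have x01 : 0 <= r / q <= 1.
  by rewrite divr_ge0 ?(ltW qp) //= ler_pdivrMr // mul1r lerDl.
have b01 : 0 < WR / W < 1 by rewrite divr_gt0 //= ltr_pdivrMr // mul1r ltrDl.
have kl : q * (WR / W - r / q) ^+ 2 <=
    r * ln (r / q / (WR / W)) + l * ln (l / q / (WL / W)).
  have := ler_wpM2l (ltW qp) (binary_kl_ge_sqr x01 b01).
  have -> : 1 - r / q = l / q by rewrite /q; field; rewrite gt_eqF.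
  have -> : 1 - WR / W = WL / W by rewrite /W; field; rewrite gt_eqF.
  have qK z y : q * (z / q * y) = z * y by rewrite mulrA [q * _]mulrC divfK ?gt_eqF.
  by rewrite -/q mulrDr !qK.
have pos (z : R) : 0 <= z -> z != 0 -> 0 < z by move=> z0 zn0; rewrite lt_def zn0.
rewrite !mul_ln_div in kl *; first by rewrite /q in kl *; lra.
all: by move=> nz; split; rewrite ?divr_gt0 //; apply: pos.
Qed.

Lemma sqr_sum_le_sum_sqr (I : finType) (p f : I -> R) : (forall i, 0 <= p i) ->
  \sum_i p i <= 1 -> (\sum_i p i * f i) ^+ 2 <= \sum_i p i * f i ^+ 2.
Proof.
move=> p0 p1.
have expand c : \sum_i p i * (f i - c) ^+ 2 =
    \sum_i p i * f i ^+ 2 - 2 * c * (\sum_i p i * f i) + c ^+ 2 * \sum_i p i.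
  rewrite !mulr_sumr -sumrB -big_split /=.
  by apply: eq_bigr => i _; ring.
set m := \sum_i p i * f i.
have := expand m; have : 0 <= \sum_i p i * (f i - m) ^+ 2.
  by apply: sumr_ge0 => i _; rewrite mulr_ge0 ?sqr_ge0.
have : m ^+ 2 * \sum_i p i <= m ^+ 2 by rewrite ler_piMr ?sqr_ge0.
rewrite -/m expr2; lra.
Qed.

Lemma sum_entr_le_ln_card (I : finType) (p : I -> R) : (0 < #|I|)%N ->
  (forall i, 0 <= p i) -> \sum_i p i = 1 -> \sum_i entr (p i) <= ln #|I|%:R.
Proof.
move=> I0 p0 p1; set K : R := #|I|%:R.
have K0 : 0 < K by rewrite ltr0n.
(* p ln (1/p) = p ln K + p ln (1/(K p)) <= p ln K + 1/K - p *)
have entr_le i : entr (p i) <= p i * ln K + K^-1 - p i.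
  rewrite /entr; have [->|pn0] := eqVneq (p i) 0.
    by rewrite mul0r add0r subr0 invr_ge0 (ltW K0).
  have pp : 0 < p i by rewrite lt_def pn0 p0.
  have Kp : 0 < (K * p i)^-1 by rewrite invr_gt0 mulr_gt0.
  have := ln_le_subr1 Kp.
  rewrite invfM lnM ?posrE ?invr_gt0 // !lnV ?posrE //.
  have pK : p i * (K^-1 / p i) = K^-1 by rewrite mulrC divfK ?gt_eqF.
  by move=> /(ler_wpM2l (ltW pp)); rewrite !mulrBr pK mulr1 mulrN; lra.
apply: le_trans (ler_sum _ (fun i _ => entr_le i)) _.
rewrite !big_split /= sumrN -mulr_suml p1 mul1r sumr_const -mulr_natr -/K.
by rewrite mulVf ?gt_eqF // addrK.
Qed.

Lemma ln_le_harmonic n : ln (n.+1%:R : R) <= \sum_(j < n) harmonic j.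
Proof.
elim: n => [|n IH]; first by rewrite big_ord0 ln1.
rewrite big_ord_recr /=.
have -> : (n.+2%:R : R) = n.+1%:R * (1 + n.+1%:R^-1).
  by rewrite mulrDr mulr1 mulfV // -natr1.
rewrite lnM ?posrE ?ltr0n ?addr_gt0 ?invr_gt0 ?ltr0n //.
apply: lerD => //; apply: le_ln1Dx.
by apply: lt_trans (_ : 0 < _); rewrite ?oppr_lt0 ?invr_gt0 ?ltr0n.
Qed.

Lemma ln2_ge : 31 / 50 <= ln (2 : R).
Proof.
have e31 : expR (31 / 200 : R) <= 200 / 169.
  have := expR_ge1Dx (- (31 / 200 : R)); rewrite expRN.
  rewrite -[X in _ <= X -> _]div1r ler_pdivlMr ?expR_gt0 //; lra.
suff : expR (31 / 50 : R) <= 2 by rewrite -ler_ln ?posrE ?expR_gt0 // expRK.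
rewrite (_ : 31 / 50 = 4%:R * (31 / 200) :> R); last by field.
rewrite expRM_natl; apply: le_trans (lerXn2r 4 _ _ e31) _; rewrite ?nnegrE ?expR_ge0 //.
rewrite expr_div_n ler_pdivrMr ?exprn_gt0 //; lra.
Qed.

Lemma threshold_bound (c a g H : R) : 0 < c -> 0 < a <= 2 * c ->
  0 < g <= 1 / 2 ->
  4 * (1 - g) ^+ 2 / (g ^+ 2 * log2 (expR 1)) * c * ln (2 * c / a) <= H ->
  c - g ^+ 2 * H <= a.
Proof.
move=> c0 /andP[a0 a2c] /andP[g0 g12] cH.
have l2_ge := ln2_ge.
have l2_le1 : ln 2 <= 1 :> R by have := @ln_le_subr1 2; rewrite ltr0n => /(_ isT); lra.
have lnb_ge0 : 0 <= ln (2 * c / a) by rewrite ln_ge0 // ler_pdivlMr // mul1r.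
have lnb_ge : ln 2 + 1 - a / c <= ln (2 * c / a).
  rewrite -mulrA lnM ?posrE ?divr_gt0 // -[c / a]invf_div lnV ?posrE ?divr_gt0 //.
  by have := ln_le_subr1 (divr_gt0 a0 c0); lra.
have coefE : g ^+ 2 * (4 * (1 - g) ^+ 2 / (g ^+ 2 * log2 (expR 1))) =
    4 * (1 - g) ^+ 2 * ln 2.
  by rewrite /log2 expRK; field; rewrite gt_eqF ?exprn_gt0 //; lra.
have gH : ln 2 * c * ln (2 * c / a) <= g ^+ 2 * H.
  apply: le_trans (ler_wpM2l (sqr_ge0 g) cH).
  rewrite mulrA (mulrA (g ^+ 2)) coefE.
  apply: ler_wpM2r => //; apply: ler_wpM2r; first exact: ltW.
  have four_ge1 : 1 <= 4 * (1 - g) ^+ 2.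
    have : 0 <= (1 / 2 - g) * (3 / 2 - g) by apply: mulr_ge0; lra.
    nra.
  by rewrite ler_peMl //; lra.
have l2_ge0 : 0 <= ln 2 :> R by lra.
have := ler_wpM2l (mulr_ge0 l2_ge0 (ltW c0)) lnb_ge.
have -> : ln 2 * c * (ln 2 + 1 - a / c) = ln 2 * ln 2 * c + ln 2 * c - ln 2 * a.
  by field; rewrite gt_eqF.
(* 1 <= ln 2 ^ 2 + ln 2 as ln 2 exceeds the inverse golden ratio 0.618... *)
have : 0 <= c * (ln 2 * ln 2 + ln 2 - 1) by apply: mulr_ge0; nra.
have : 0 <= (1 - ln 2) * a by apply: mulr_ge0; lra.
lra.
Qed.

End entropy_inequalities.

Lemma sum_le_size_mul {R : numDomainType} (T : eqType) (f : T -> R) (M : R) (L : seq T) :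
  {in L, forall l, f l <= M} -> \sum_(l <- L) f l <= (size L)%:R * M.
Proof.
elim: L => [|x L IH] fM; first by rewrite big_nil mul0r.
rewrite big_cons /= -add1n natrD mulrDl mul1r lerD ?fM ?mem_head // IH // => l lL.
by rewrite fM // in_cons lL orbT.
Qed.

Section leaf_weights.
Variables (R : realType) (dO : measure_display) (Omega : measurableType dO).
Variables (P : probability Omega R) (d k : nat).
Variables (X : Omega -> 'rV[R]_d) (Y : Omega -> 'I_k).
Hypothesis mY : forall i, measurable (Y @^-1` [set i]).

Lemma weight_ge0 S : 0 <= weight P X S.
Proof. exact/fine_ge0/measure_ge0. Qed.

Lemma jointw_ge0 S i : 0 <= jointw P X Y S i.
Proof. exact/fine_ge0/measure_ge0. Qed.

Lemma pi__ge0 S i : 0 <= pi_ P X Y S i.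
Proof. by rewrite divr_ge0 ?jointw_ge0 ?weight_ge0. Qed.

Lemma fine_measureIC (A B : set Omega) : measurable A -> measurable B ->
  fine (P A) = fine (P (A `&` B)) + fine (P (A `&` ~` B)).
Proof.
move=> mA mB; have mAB : measurable (A `&` B) by exact: measurableI.
have mAC : measurable (A `&` ~` B) by exact/measurableI/measurableC.
rewrite -fineD ?fin_num_measure // -measureU //.
  by rewrite -setIUr setUCr setIT.
by rewrite setIACA setICr setI0.
Qed.

Lemma sum_jointw S : measurable (X @^-1` S) ->
  \sum_i jointw P X Y S i = weight P X S.
Proof.
move=> mS; pose F j := X @^-1` S `&` [set w | nat_of_ord (Y w) = j].
have FE (i : 'I_k) : X @^-1` S `&` Y @^-1` [set i] = F i.
  by apply/seteqP; split=> w [Sw /= Yw]; split=> //=; [rewrite Yw | apply: val_inj].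
have mF j : (j < k)%N -> measurable (F j).
  by move=> jk; rewrite -[j]/(nat_of_ord (Ordinal jk)) -FE; apply: measurableI.
have UF : \big[setU/set0]_(j < k) F j = X @^-1` S.
  rewrite -bigcup_mkord; apply/seteqP; split=> [w [j _ []] //|w Sw].
  by exists (Y w) => //=; exact: ltn_ord.
have tF : trivIset `I_k F by move=> i j _ _ [w [[_ <-] [_ <-]]].
rewrite /jointw (eq_bigr (fun i : 'I_k => fine (P (F i)))) => [|i _]; last by rewrite FE.
rewrite sum_fine => [|i _]; last exact/fin_num_measure/mF.
by rewrite -measure_semi_additive_ord_I ?UF.
Qed.

Lemma sum_pi S : measurable (X @^-1` S) -> weight P X S != 0 ->
  \sum_i pi_ P X Y S i = 1.
Proof. by move=> mS W0; rewrite /pi_ -mulr_suml sum_jointw // divff. Qed.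

Definition leaf_entropy S := weight P X S * \sum_i entr (pi_ P X Y S i).

Lemma entropyGE L : entropyG P X Y L = \sum_(l <- L) leaf_entropy l.
Proof. by []. Qed.

Section split.
Variables (S : set 'rV[R]_d) (h : 'rV[R]_d -> R).
Hypotheses (mS : measurable (X @^-1` S)) (mh : measurable (X @^-1` [set z | 0 < h z])).

Lemma measurable_right_child : measurable (X @^-1` right_child S h).
Proof. exact: measurableI. Qed.

Lemma measurable_left_child : measurable (X @^-1` left_child S h).
Proof. exact/measurableI/measurableC. Qed.

Lemma weight_children :
  weight P X S = weight P X (right_child S h) + weight P X (left_child S h).
Proof. exact: fine_measureIC. Qed.

Lemma jointw_children i :
  jointw P X Y S i = jointw P X Y (right_child S h) i + jointw P X Y (left_child S h) i.
Proof.
by rewrite /jointw (fine_measureIC (measurableI _ _ mS (mY i)) mh); congr (_ + _); rewrite setIAC.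
Qed.

End split.

Lemma WHA_gamma_le_half Xset gamma S h : WHA P X Y Xset gamma S h -> gamma <= 1 / 2.
Proof. by case=> _ _; rewrite le_min => /andP[g1 g2] _; lra. Qed.

Lemma WHA_children_weight_gt0 Xset gamma S h :
    measurable (X @^-1` S) -> 0 < gamma -> WHA P X Y Xset gamma S h ->
  0 < weight P X (right_child S h) /\ 0 < weight P X (left_child S h).
Proof.
move=> mS g0 [_ mh + _]; rewrite le_min /beta_ => /andP[].
move: (weight_ge0 S) (weight_ge0 (right_child S h)) (weight_children mS mh).
set W := weight P X S; set WR := weight P X _; set WL := weight P X _ => W0 WR0 WE.
have [->|Wn0] := eqVneq W 0; first by rewrite invr0 mulr0; lra.
have Wp : 0 < W by rewrite lt_def Wn0.
move=> gR gL; have WRp : 0 < WR by move: (lt_le_trans g0 gR); rewrite pmulr_lgt0 ?invr_gt0.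
split=> //; have : WR / W < 1 by lra.
rewrite ltr_pdivrMr // mul1r; lra.
Qed.

Lemma WHA_sqr_le Xset gamma S h : measurable (X @^-1` S) -> 0 < gamma ->
    WHA P X Y Xset gamma S h -> weight P X S != 0 ->
  gamma ^+ 2 <= \sum_i pi_ P X Y S i * (beta_ P X S h - Pmi P X Y S h i) ^+ 2.
Proof.
move=> mS g0 [_ _ _ gJ] W0; rewrite /Jsplit mulrC mulKf ?pnatr_eq0 // in gJ.
under eq_bigr do rewrite -real_normK ?num_real //.
apply: le_trans (sqr_sum_le_sum_sqr _ (pi__ge0 S) _); last by rewrite sum_pi.
by rewrite lerXn2r ?nnegrE ?(ltW g0) // (le_trans (ltW g0)).
Qed.

Lemma leaf_entropy_split Xset gamma S h :
    measurable (X @^-1` S) -> 0 < gamma -> WHA P X Y Xset gamma S h ->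
  weight P X S * gamma ^+ 2 <=
  leaf_entropy S - leaf_entropy (right_child S h) - leaf_entropy (left_child S h).
Proof.
move=> mS g0 hW; have [WR0 WL0] := WHA_children_weight_gt0 mS g0 hW.
have [_ mh _ _] := hW; have WE := weight_children mS mh.
have W0 : weight P X S != 0 by rewrite WE gt_eqF ?addr_gt0.
have gap := WHA_sqr_le mS g0 hW W0.
apply: le_trans (ler_wpM2l (weight_ge0 S) gap) _.
rewrite /leaf_entropy mulr_sumr !mulr_sumr -!sumrB; apply: ler_sum => i _.
rewrite /pi_ /beta_ /Pmi (jointw_children mS mh) WE.
rewrite mulrA [_ * (_ / _)]mulrC divfK ?gt_eqF ?addr_gt0 //.
by apply: entr_split_gain; rewrite ?jointw_ge0.
Qed.

End leaf_weights.

Section growth.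
Variables (R : realType) (dO : measure_display) (Omega : measurableType dO).
Variables (P : probability Omega R) (d k : nat).
Variables (X : Omega -> 'rV[R]_d) (Y : Omega -> 'I_k).
Hypothesis mY : forall i, measurable (Y @^-1` [set i]).
Variables (Xset : set 'rV[R]_d) (gamma : R).

Definition grown_tree_inv (s : nat) (L : seq (set 'rV[R]_d)) : Prop :=
  [/\ size L = s.+1, all (fun l => `[< measurable (X @^-1` l) >]) L,
      \sum_(l <- L) weight P X l = 1 &
      entropyG P X Y L <= ln k%:R - gamma ^+ 2 * \sum_(j < s) harmonic j].

Lemma grown_tree_inv0 : (0 < k)%N -> grown_tree_inv 0 [:: setT].
Proof.
move=> k0; have mT : measurable (X @^-1` [set: 'rV[R]_d]) by rewrite preimage_setT.
have wT : weight P X setT = 1 by rewrite /weight preimage_setT probability_setT.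
split=> //=; first by rewrite andbT; apply/asboolP.
  by rewrite big_seq1.
rewrite big_ord0 mulr0 subr0 entropyGE big_seq1 /leaf_entropy wT mul1r.
have := sum_entr_le_ln_card _ (pi__ge0 P X Y setT) (sum_pi mY mT _).
by rewrite card_ord wT oner_neq0; apply.
Qed.

Lemma grow_step_inv s L L' : 0 < gamma -> grown_tree_inv s L ->
  grow_step P X Y Xset gamma L L' -> grown_tree_inv s.+1 L'.
Proof.
move=> g0 [sizeL mL sumL entL] [L1 [L2 [m [h [eL maxm hW ->]]]]].
have wm : (s.+1%:R)^-1 <= weight P X m.
  rewrite -div1r ler_pdivrMr ?ltr0n // mulrC -{1}sumL -sizeL.
  apply: sum_le_size_mul => l lL.
  by case/splitPr E: {1}L / lL => [A B]; apply: (maxm A B l).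
subst L.
move: mL; rewrite !all_cat /= => /and3P[mL1 /asboolP mm mL2].
have [_ mh _ _] := hW.
have gain := leaf_entropy_split mY mm g0 hW.
split.
- by move: sizeL; rewrite !size_cat /= !addnS => -[<-].
- rewrite all_cat /= mL1 mL2 /= andbT; apply/andP; split; apply/asboolP.
    exact: measurable_right_child.
  exact: measurable_left_child.
- by move: sumL; rewrite !big_cat !big_cons /= (weight_children P mm mh); lra.
move: entL; rewrite !entropyGE !big_cat !big_cons /= big_ord_recr /=.
have := ler_wpM2l (ltW (exprn_gt0 2 g0)) wm.
set z := (s.+1%:R)^-1; set H := \sum_(i < s) _; lra.
Qed.

End growth.

Theorem theorem1 (R : realType) (dO : measure_display) (Omega : measurableType dO)
  (P : probability Omega R) (d k : nat) (Xset : set 'rV[R]_d)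
  (X : Omega -> 'rV[R]_d) (Y : Omega -> 'I_k) (gamma : R)
  (Ls : nat -> seq (set 'rV[R]_d)) :
  (2 <= k)%N ->
  (forall w, Xset (X w)) ->
  (forall i, measurable (Y @^-1` [set i])) ->
  0 < gamma ->
  Ls 0%N = [:: setT] ->
  forall (alpha : R), 0 < alpha -> alpha <= 2 * ln (k%:R : R) ->
  forall t : nat,
  (forall s : nat, (s < t)%N -> grow_step P X Y Xset gamma (Ls s) (Ls s.+1)) ->
  powR (2 * ln (k%:R : R) / alpha)
       (4 * (1 - gamma) ^+ 2 / (gamma ^+ 2 * log2 (expR 1)) * ln (k%:R : R))
    <= t%:R ->
  entropyG P X Y (Ls t) <= alpha.
Proof.
(* Only the partition of a node by [0 < h] matters: the range of [h]. *)
move=> k2 _ mY g0 Ls0 alpha a0 a2 t steps t_ge.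
have inv s : (s <= t)%N -> grown_tree_inv P X Y gamma s (Ls s).
  elim: s => [_|s IH st]; first by rewrite Ls0; exact/grown_tree_inv0/ltnW.
  exact: grow_step_inv (IH (ltnW st)) (steps s st).
have [_ _ _ entropy_le] := inv t (leqnn t).
have lnk0 : 0 < ln (k%:R : R) by rewrite ln_gt0 // ltr1n.
have b0 : 0 < 2 * ln (k%:R : R) / alpha by rewrite divr_gt0 // mulr_gt0.
have t0 : (0 < t)%N by rewrite -(ltr0n R) (lt_le_trans (powR_gt0 _ b0) t_ge).
have [L1 [L2 [m [h [_ _ hW _]]]]] := steps 0%N t0.
apply: le_trans entropy_le (threshold_bound _ _ _ _) => //; first by rewrite a0.
  by rewrite g0 (WHA_gamma_le_half hW).
rewrite -(ln_powR (2 * ln k%:R / alpha)); apply: le_trans (ln_le_harmonic t).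
by rewrite ler_ln ?posrE ?powR_gt0 ?ltr0n // (le_trans t_ge) ?ler_nat.
Qed.
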